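(* Let $(X,\mathcal{O}(X))$ be a measurable space, $\mathcal{A}$ a unital $C^*$-algebra and $\mathcal{H}$ a finite-dimensional Hilbert space. Let $\mathcal{I}:\mathcal{O}(X)\to CP(\mathcal{A},\mathcal{B}(\mathcal{H}))$ be a UCP instrument which is $C^*$-extreme in $I_{\mathcal{H}}(X,\mathcal{A})$. Then its POVM marginal $\mu_\mathcal{I}$, $\mu_\mathcal{I}(A)=\mathcal{I}(A)(1_\mathcal{A})$, is a $C^*$-extreme point of the set of normalized POVMs on $(X,\mathcal{O}(X))$ with values in $\mathcal{B}(\mathcal{H})$.
   Context: A CP instrument is a map $\mathcal{I}$ from $\mathcal{O}(X)$ to the completely positive maps $\mathcal{A}\to\mathcal{B}(\mathcal{H})$ such that for all $a\in\mathcal{A}$, $h,k\in\mathcal{H}$, $A\mapsto\langle h,\mathcal{I}(A)(a)k\rangle$ is a countably additive complex measure. It is UCP if $\mathcal{I}(X)(1_\mathcal{A})=I_\mathcal{H}$; $I_{\mathcal{H}}(X,\mathcal{A})$ is the set of UCP instruments. $\mathcal{I}\in I_{\mathcal{H}}(X,\mathcal{A})$ is $C^*$-extreme if whenever $\mathcal{I}(\cdot)=\sum_{i=1}^nT_i^*\mathcal{I}_i(\cdot)T_i$ with $\mathcal{I}_i\in I_{\mathcal{H}}(X,\mathcal{A})$ and invertible $T_i\in\mathcal{B}(\mathcal{H})$ with $\sum T_i^*T_i=I_\mathcal{H}$, there are unitaries $U_i$ with $\mathcal{I}_i(\cdot)=U_i^*\mathcal{I}(\cdot)U_i$. Analogously,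 a normalized POVM $\mu$ ($\mu(X)=I_\mathcal{H}$) is $C^*$-extreme in the set of normalized POVMs if whenever $\mu(\cdot)=\sum_iT_i^*\mu_i(\cdot)T_i$ with normalized POVMs $\mu_i$ and invertible $T_i$ with $\sum T_i^*T_i=I_\mathcal{H}$, each $\mu_i$ is unitarily equivalent to $\mu$ ($\mu_i(\cdot)=U_i^*\mu(\cdot)U_i$ for unitaries $U_i$). *)

From HB Require Import structures.
From mathcomp Require Import all_boot all_order all_algebra.
From mathcomp Require Import complex.
From mathcomp Require Import classical_sets reals measure.
Set Implicit Arguments.
Unset Strict Implicit.
Unset Printing Implicit Defensive.
Import Order.TTheory GRing.Theory Num.Theory.
Local Open Scope ring_scope.
Local Open Scope classical_set_scope.

(* Complex matrices: B(H) for H = C^n (finite-dimensional Hilbert space) *)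

Definition adj (R : realType) (m p : nat) (M : 'M[R[i]]_(m, p)) : 'M[R[i]]_(p, m) :=
  (map_mx (@conjc R) M)^T.

Definition inner (R : realType) (n : nat) (h k : 'cV[R[i]]_n) : R[i] :=
  (adj h *m k) 0 0.

Definition psd (R : realType) (n : nat) (M : 'M[R[i]]_n) : Prop :=
  forall h : 'cV[R[i]]_n, 0 <= inner h (M *m h).

Definition unitary (R : realType) (n : nat) (U : 'M[R[i]]_n) : Prop :=
  adj U *m U = 1%:M /\ U *m adj U = 1%:M.

Record unital_Cstar_algebra (R : realType) (A : algType R[i]) := UnitalCstar {
  cs_star : A -> A;
  cs_norm : A -> R;
  cs_starD : forall a b, cs_star (a + b) = cs_star a + cs_star b;
  cs_starZ : forall (c : R[i]) a, cs_star (c *: a) = (c^*)%C *: cs_star a;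
  cs_starM : forall a b, cs_star (a * b) = cs_star b * cs_star a;
  cs_starK : forall a, cs_star (cs_star a) = a;
  cs_norm_ge0 : forall a, 0 <= cs_norm a;
  cs_norm_eq0 : forall a, cs_norm a = 0 -> a = 0;
  cs_normD : forall a b, cs_norm (a + b) <= cs_norm a + cs_norm b;
  cs_normZ : forall (c : R[i]) a, cs_norm (c *: a) = complex.Re `|c| * cs_norm a;
  cs_normM : forall a b, cs_norm (a * b) <= cs_norm a * cs_norm b;
  cs_Cstar_id : forall a, cs_norm (cs_star a * a) = cs_norm a ^+ 2;
  cs_complete : forall u : nat -> A,
    (forall e : R, 0 < e -> exists N : nat, forall p q : nat, (N <= p)%N -> (N <= q)%N ->
       cs_norm (u p - u q) < e) ->
    exists l : A, forall e : R, 0 < e -> exists N : nat, forall p : nat, (N <= p)%N ->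
       cs_norm (u p - l) < e
}.

Section CstarDefs.
Variables (R : realType) (A : algType R[i]) (S : unital_Cstar_algebra A).

Definition mx_star (k : nat) (M : 'M[A]_k) : 'M[A]_k :=
  \matrix_(i, j) cs_star S (M j i).

Definition mx_invertible (k : nat) (M : 'M[A]_k) : Prop :=
  exists N : 'M[A]_k, N *m M = 1%:M /\ M *m N = 1%:M.

(* positive elements of the C*-algebra M_k(A): self-adjoint with spectrum in [0, +oo) *)
Definition mx_positive (k : nat) (M : 'M[A]_k) : Prop :=
  mx_star M = M /\
  forall lam : R[i], ~ mx_invertible (M - (lam *: (1 : A))%:M) -> 0 <= lam.

Definition Clinear (n : nat) (phi : A -> 'M[R[i]]_n) : Prop :=
  forall (c : R[i]) (a b : A), phi (c *: a + b) = c *: phi a + phi b.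

(* completely positive maps A -> B(C^n): linear, and for every k the
   amplification phi^(k) : M_k(A) -> M_k(B(C^n)) = B((C^n)^k) maps positive
   elements to positive operators *)
Definition completely_positive (n : nat) (phi : A -> 'M[R[i]]_n) : Prop :=
  Clinear phi /\
  forall (k : nat) (M : 'M[A]_k), mx_positive M ->
    forall xi : 'I_k -> 'cV[R[i]]_n,
      0 <= \sum_(i < k) \sum_(j < k) inner (xi i) (phi (M i j) *m xi j).

End CstarDefs.

Section Measures.
Variables (R : realType) (d : measure_display) (X : measurableType d).

Definition cvgC (u : nat -> R[i]) (l : R[i]) : Prop :=
  forall e : R, 0 < e -> exists N : nat, forall m : nat, (N <= m)%N ->
    `|u m - l| < e%:C%C.

Definition countably_additive (f : set X -> R[i]) : Prop :=
  forall F : nat -> set X, (forall i, measurable (F i)) -> trivIset setT F ->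
    cvgC (fun N => \sum_(i < N) f (F i)) (f (\bigcup_i F i)).

Definition POVM (n : nat) (mu : set X -> 'M[R[i]]_n) : Prop :=
  (forall E, measurable E -> psd (mu E)) /\
  (forall h k : 'cV[R[i]]_n, countably_additive (fun E => inner h (mu E *m k))).

Definition normalized_POVM (n : nat) (mu : set X -> 'M[R[i]]_n) : Prop :=
  POVM mu /\ mu setT = 1%:M.

Definition Cstar_extreme_POVM (n : nat) (mu : set X -> 'M[R[i]]_n) : Prop :=
  normalized_POVM mu /\
  forall (m : nat) (T : 'I_m -> 'M[R[i]]_n) (mus : 'I_m -> set X -> 'M[R[i]]_n),
    (forall i, normalized_POVM (mus i)) ->
    (forall i, T i \in unitmx) ->
    \sum_(i < m) adj (T i) *m T i = 1%:M ->
    (forall E, measurable E -> mu E = \sum_(i < m) adj (T i) *m mus i E *m T i) ->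
    forall i, exists U : 'M[R[i]]_n, unitary U /\
      forall E, measurable E -> mus i E = adj U *m mu E *m U.

Variables (A : algType R[i]) (S : unital_Cstar_algebra A).

Definition CP_instrument (n : nat) (I : set X -> A -> 'M[R[i]]_n) : Prop :=
  (forall E, measurable E -> completely_positive S (I E)) /\
  (forall (a : A) (h k : 'cV[R[i]]_n),
     countably_additive (fun E => inner h (I E a *m k))).

Definition UCP_instrument (n : nat) (I : set X -> A -> 'M[R[i]]_n) : Prop :=
  CP_instrument I /\ I setT 1 = 1%:M.

Definition Cstar_extreme_instrument (n : nat) (I : set X -> A -> 'M[R[i]]_n) : Prop :=
  UCP_instrument I /\
  forall (m : nat) (T : 'I_m -> 'M[R[i]]_n) (Is : 'I_m -> set X -> A -> 'M[R[i]]_n),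
    (forall i, UCP_instrument (Is i)) ->
    (forall i, T i \in unitmx) ->
    \sum_(i < m) adj (T i) *m T i = 1%:M ->
    (forall E, measurable E -> forall a, I E a = \sum_(i < m) adj (T i) *m Is i E a *m T i) ->
    forall i, exists U : 'M[R[i]]_n, unitary U /\
      forall E, measurable E -> forall a, Is i E a = adj U *m I E a *m U.

Definition marginal (n : nat) (I : set X -> A -> 'M[R[i]]_n) : set X -> 'M[R[i]]_n :=
  fun E => I E 1.

End Measures.

From HB Require Import structures.
From mathcomp Require Import all_boot all_order all_algebra.
From mathcomp Require Import complex.
From mathcomp Require Import classical_sets reals measure.
From mathcomp Require Import sesquilinear spectral.
From mathcomp Require Import ring lra.
Set Implicit Arguments.
Unset Strict Implicit.
Unset Printing Implicit Defensive.
Import Order.TTheory GRing.Theory Num.Theory.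

(* Fix a measurable E and let M = I(E)(1).  For 0 < a < 1 the instrument
   F |-> a I(F ∩ E) + (1 - a) I(F \ E) has total mass a M + (1 - a)(1 - M),
   which is T_a^* T_a for the invertible T_a = (a M + (1 - a)(1 - M))^(1/2);
   normalizing by T_a gives UCP instruments I_a with I = sum_a T_a^* I_a T_a
   (a = 2/3, 1/3).  C*-extremality makes I_{2/3} unitarily equivalent to I,
   and at E this says that 2M(1 + M)^-1 and M have the same trace.  Since
   2x/(1 + x) >= x on [0, 1] with equality only at 0 and 1, M is a
   projection: the marginal is projection-valued.
   A projection-valued POVM mu is C*-extreme: if mu = sum_i T_i^* mu_i T_i,
   each T_i^* mu_i(E) T_i lies below the projection mu(E), so it equals
   Q mu(E) with Q = T_i^* T_i commuting with mu; the unitary part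
   Q^(1/2) T_i^-1 of T_i then conjugates mu into mu_i. *)

Local Open Scope ring_scope.
(* [complex_scope] stays closed: its ['i] and [^*] would shadow those of
   [numClosedFieldType]. *)
Local Notation "x %:C" := (real_complex _ x) : ring_scope.

Section Adjoint.
Variable R : realType.
Local Notation C := R[i].
Implicit Types (m p q : nat).

Lemma adjE m p (M : 'M[C]_(m, p)) : adj M = map_mx Num.conj (M ^T).
Proof. by rewrite /adj map_trmx. Qed.

Lemma adj_mul m p q (M : 'M[C]_(m, p)) (N : 'M[C]_(p, q)) :
  adj (M *m N) = adj N *m adj M.
Proof. by rewrite /adj map_mxM trmx_mul. Qed.

Lemma adjK m p (M : 'M[C]_(m, p)) : adj (adj M) = M.
Proof. by apply/matrixP=> i j; rewrite !mxE conjcK. Qed.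

Lemma adjD m p (M N : 'M[C]_(m, p)) : adj (M + N) = adj M + adj N.
Proof. by apply/matrixP=> i j; rewrite !mxE rmorphD. Qed.

Lemma adj_scale m p c (M : 'M[C]_(m, p)) : adj (c *: M) = c^* *: adj M.
Proof. by apply/matrixP=> i j; rewrite !mxE rmorphM. Qed.

Lemma adj_scalar p (c : C) : adj (c%:M : 'M_p) = (c^*)%:M.
Proof. by apply/matrixP=> i j; rewrite !mxE rmorphMn eq_sym. Qed.

Lemma adj_mx1 p : adj (1%:M : 'M[C]_p) = 1%:M.
Proof. by rewrite adj_scalar rmorph1. Qed.

Lemma adj_diag p (d : 'rV[C]_p) : adj (diag_mx d) = diag_mx (map_mx conjc d).
Proof. by rewrite /adj map_diag_mx tr_diag_mx. Qed.

Lemma adj_delta p (i : 'I_p) : adj (delta_mx i 0 : 'cV[C]_p) = delta_mx 0 i.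
Proof. by apply/matrixP=> a b; rewrite !mxE rmorph_nat andbC. Qed.

Lemma adj_conjK p (T Ti N : 'M[C]_p) :
  T *m Ti = 1%:M -> adj Ti *m (adj T *m N *m T) *m Ti = N.
Proof. by move=> TTi; rewrite !mulmxA -adj_mul TTi adj_mx1 mul1mx -mulmxA TTi mulmx1. Qed.

Lemma inner_adj p q (h : 'cV[C]_p) (M : 'M[C]_(p, q)) k :
  inner h (M *m k) = inner (adj M *m h) k.
Proof. by rewrite /inner adj_mul adjK mulmxA. Qed.

Lemma innerDl p (h1 h2 k : 'cV[C]_p) : inner (h1 + h2) k = inner h1 k + inner h2 k.
Proof. by rewrite /inner adjD mulmxDl mxE. Qed.

Lemma innerDr p (h k1 k2 : 'cV[C]_p) : inner h (k1 + k2) = inner h k1 + inner h k2.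
Proof. by rewrite /inner mulmxDr mxE. Qed.

Lemma innerBr p (h k1 k2 : 'cV[C]_p) : inner h (k1 - k2) = inner h k1 - inner h k2.
Proof. by rewrite /inner mulmxBr !mxE. Qed.

Lemma innerZl p c (h k : 'cV[C]_p) : inner (c *: h) k = c^* * inner h k.
Proof. by rewrite /inner adj_scale -scalemxAl mxE. Qed.

Lemma innerZr p c (h k : 'cV[C]_p) : inner h (c *: k) = c * inner h k.
Proof. by rewrite /inner -scalemxAr mxE. Qed.

Lemma inner0r p (h : 'cV[C]_p) : inner h 0 = 0.
Proof. by rewrite /inner mulmx0 mxE. Qed.

Lemma inner_sumr p (h : 'cV[C]_p) (I : Type) (r : seq I) (F : I -> 'cV[C]_p) :
  inner h (\sum_(i <- r) F i) = \sum_(i <- r) inner h (F i).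
Proof. by rewrite /inner mulmx_sumr summxE. Qed.

Lemma conj_inner p (h k : 'cV[C]_p) : (inner h k)^* = inner k h.
Proof.
by rewrite /inner -[adj k *m h]adjK adj_mul adjK [in RHS]/adj !mxE.
Qed.

Lemma inner_ge0 p (h : 'cV[C]_p) : 0 <= inner h h.
Proof.
by rewrite /inner mxE; apply: sumr_ge0 => i _; rewrite !mxE mulrC mulcJ_ge0.
Qed.

Lemma inner_eq0 p (h : 'cV[C]_p) : (inner h h == 0) = (h == 0).
Proof.
apply/idP/eqP => [|->]; last by rewrite inner0r.
rewrite /inner mxE psumr_eq0 => [/allP h0|i _]; last first.
  by rewrite !mxE mulrC mulcJ_ge0.
apply/matrixP=> i j; rewrite ord1 mxE.
by move: (h0 i (mem_index_enum i)); rewrite !mxE mulf_eq0 conjc_eq0 orbb => /eqP.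
Qed.

Lemma inner_delta p (M : 'M[C]_p) i j :
  inner (delta_mx i 0) (M *m delta_mx j 0) = M i j.
Proof. by rewrite /inner adj_delta mulmxA -rowE -colE !mxE. Qed.

Lemma eq_mx_inner p (M N : 'M[C]_p) :
  (forall h k, inner h (M *m k) = inner h (N *m k)) -> M = N.
Proof. by move=> MN; apply/matrixP=> i j; rewrite -!inner_delta MN. Qed.

Lemma eq_mx_mul p q (M N : 'M[C]_(p, q)) :
  (forall k : 'cV[C]_q, M *m k = N *m k) -> M = N.
Proof.
move=> MN; apply/matrixP=> i j.
by move: (MN (delta_mx j 0)); rewrite -!colE => /matrixP /(_ i 0); rewrite !mxE.
Qed.

End Adjoint.

Section Positive.
Variables (R : realType) (p : nat).
Local Notation C := R[i].
Implicit Types (M N B : 'M[C]_p) (h : 'cV[C]_p).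

Lemma quad_eq0_mx0 M : (forall h, inner h (M *m h) = 0) -> M = 0.
Proof.
move=> M0; apply/matrixP=> i j; rewrite mxE -inner_delta.
set u := delta_mx i 0 : 'cV[C]_p; set v := delta_mx j 0 : 'cV[C]_p.
have polar c : 0 = c * inner u (M *m v) + c^* * inner v (M *m u).
  have := M0 (u + c *: v).
  by rewrite !mulmxDr -!scalemxAr !innerDl !innerDr !innerZl !innerZr !M0 => <-; ring.
have : 'i * (1 * inner u (M *m v) + 1^* * inner v (M *m u)) +
    ('i * inner u (M *m v) + 'i^* * inner v (M *m u)) = 0.
  by rewrite -polar -polar mulr0 addr0.
rewrite conjC1 conjCi.
have -> a b : 'i * (1 * a + 1 * b) + ('i * a + - 'i * b) = 'i * a *+ 2 :> C by ring.
by move/eqP; rewrite mulrn_eq0 /= mulf_eq0 (negbTE (@neq0Ci C)) => /eqP.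
Qed.

Lemma psd_adj N : psd N -> adj N = N.
Proof.
move=> N0; apply/eqP; rewrite -subr_eq0; apply/eqP; apply: quad_eq0_mx0 => h.
by rewrite mulmxBl innerBr inner_adj adjK -conj_inner geC0_conj ?subrr.
Qed.

Lemma psd_congr N B : psd N -> psd (adj B *m N *m B).
Proof. by move=> N0 h; rewrite -!mulmxA inner_adj adjK. Qed.

Lemma psd_adjMl B : psd (adj B *m B).
Proof. by move=> h; rewrite -mulmxA inner_adj adjK inner_ge0. Qed.

End Positive.

Lemma conjC_fixE (R : realType) (z : R[i]) : z^* = z -> z = (complex.Re z)%:C.
Proof. by case: z => a b [] bE; apply/eqP; rewrite eq_complex /= eqxx; apply/eqP; lra. Qed.

Definition eigval (R : realType) (p : nat) (M : 'M[R[i]]_p) (k : 'I_p) : R :=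
  complex.Re (spectral_diag M 0 k).

(* [f(M)] through the spectral decomposition; only meaningful for hermitian [M] *)
HB.lock Definition hfun (R : realType) (p : nat) (M : 'M[R[i]]_p) (f : R -> R) :=
  adj (spectralmx M) *m diag_mx (\row_k (f (eigval M k))%:C) *m spectralmx M.

Section HermitianCalculus.
Variables (R : realType) (p : nat).
Local Notation C := R[i].
Implicit Types (M X : 'M[C]_p) (f g : R -> R).

Lemma spectral_mul_adj M : spectralmx M *m adj (spectralmx M) = 1%:M.
Proof. by rewrite adjE; apply/unitarymxP/spectral_unitarymx. Qed.

Lemma spectral_adj_mul M : adj (spectralmx M) *m spectralmx M = 1%:M.
Proof. exact/mulmx1C/spectral_mul_adj. Qed.

Lemma hermitian_spectral M : adj M = M ->
  M = adj (spectralmx M) *m diag_mx (spectral_diag M) *m spectralmx M.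
Proof.
move=> MH; have Mnormal : M \is normalmx by apply/normalmxP; rewrite -adjE MH.
rewrite adjE -invmx_unitary ?spectral_unitarymx //; exact/orthomx_spectralP.
Qed.

Lemma hermitian_diag_spectral M : adj M = M ->
  diag_mx (spectral_diag M) = spectralmx M *m M *m adj (spectralmx M).
Proof.
move=> MH; rewrite [X in _ *m X *m _](hermitian_spectral MH).
by rewrite !mulmxA spectral_mul_adj mul1mx -mulmxA spectral_mul_adj mulmx1.
Qed.

Lemma hermitian_spectral_diag M k : adj M = M ->
  spectral_diag M 0 k = (eigval M k)%:C.
Proof.
move=> MH; apply: conjC_fixE.
have : adj (diag_mx (spectral_diag M)) = diag_mx (spectral_diag M).
  by rewrite (hermitian_diag_spectral MH) !adj_mul adjK MH mulmxA.
by rewrite adj_diag => /matrixP /(_ k k); rewrite !mxE eqxx !mulr1n.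
Qed.

Lemma hfun_id M : adj M = M -> hfun M id = M.
Proof.
move=> MH; rewrite hfun.unlock [RHS](hermitian_spectral MH); congr (_ *m diag_mx _ *m _).
by apply/matrixP=> i k; rewrite ord1 mxE hermitian_spectral_diag.
Qed.

Lemma eq_hfun M f g : (forall k, f (eigval M k) = g (eigval M k)) -> hfun M f = hfun M g.
Proof.
move=> fg; rewrite hfun.unlock; congr (_ *m diag_mx _ *m _).
by apply/matrixP=> i k; rewrite !mxE fg.
Qed.

Lemma hfunM M f g : hfun M f *m hfun M g = hfun M (fun x => f x * g x).
Proof.
rewrite hfun.unlock.
rewrite !mulmxA -[_ *m spectralmx M *m adj _]mulmxA spectral_mul_adj mulmx1.
rewrite -[adj _ *m _ *m _]mulmxA mulmx_diag; congr (_ *m diag_mx _ *m _).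
by apply/matrixP=> i k; rewrite !mxE rmorphM.
Qed.

Lemma hfunD M f g : hfun M f + hfun M g = hfun M (fun x => f x + g x).
Proof.
rewrite hfun.unlock.
rewrite -mulmxDl -mulmxDr -raddfD; congr (_ *m diag_mx _ *m _).
by apply/matrixP=> i k; rewrite !mxE rmorphD.
Qed.

Lemma hfunZ M c f : c%:C *: hfun M f = hfun M (fun x => c * f x).
Proof.
rewrite hfun.unlock.
rewrite scalemxAl scalemxAr; congr (_ *m _ *m _).
by apply/matrixP=> i j; rewrite !mxE mulrnAr rmorphM.
Qed.

Lemma hfun_cst M c : hfun M (fun _ => c) = c%:C%:M.
Proof.
rewrite hfun.unlock.
rewrite (_ : \row_k _ = const_mx c%:C); last by apply/matrixP=> i k; rewrite !mxE.
by rewrite diag_const_mx mul_mx_scalar -scalemxAl spectral_adj_mul scalemx1.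
Qed.

Lemma hfun1 M : hfun M (fun _ => 1) = 1%:M.
Proof. by rewrite hfun_cst rmorph1. Qed.

Lemma hfun_adj M f : adj (hfun M f) = hfun M f.
Proof.
rewrite hfun.unlock.
rewrite !adj_mul adjK adj_diag mulmxA; congr (_ *m diag_mx _ *m _).
by apply/matrixP=> i k; rewrite !mxE conjc_real.
Qed.

Lemma mxtrace_hfun M f : \tr (hfun M f) = \sum_k (f (eigval M k))%:C.
Proof.
rewrite hfun.unlock.
rewrite mxtrace_mulC mulmxA spectral_mul_adj mul1mx mxtrace_diag.
by apply: eq_bigr => k _; rewrite mxE.
Qed.

Lemma hfun_inv M f : (forall k, f (eigval M k) != 0) ->
  hfun M f *m hfun M (fun x => (f x)^-1) = 1%:M.
Proof.
by move=> f0; rewrite hfunM -(hfun1 M); apply: eq_hfun => k; rewrite mulfV.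
Qed.

Lemma psd_hfun_ge0 M f k : psd (hfun M f) -> 0 <= f (eigval M k).
Proof.
move=> /(_ (adj (spectralmx M) *m delta_mx k 0)); rewrite -inner_adj hfun.unlock.
set P := spectralmx M; set D := diag_mx _.
rewrite !mulmxA spectral_mul_adj mul1mx -[D *m P *m adj P]mulmxA spectral_mul_adj mulmx1.
by rewrite inner_delta !mxE eqxx mulr1n ler0c.
Qed.

Lemma diag_mx_comm (d e : 'rV[C]_p) Y :
  (forall i j, d 0 i = d 0 j -> e 0 i = e 0 j) ->
  diag_mx d *m Y = Y *m diag_mx d -> diag_mx e *m Y = Y *m diag_mx e.
Proof.
move=> de /matrixP dY; apply/matrixP=> i j; move: (dY i j).
rewrite !mul_diag_mx !mul_mx_diag !mxE.
have [->|Yij dYij] := eqVneq (Y i j) 0; first by rewrite !(mulr0, mul0r).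
have dij : d 0 i = d 0 j by apply: (mulIf Yij); rewrite dYij mulrC.
by rewrite (de i j dij) mulrC.
Qed.

Lemma conj_unitary_comm (P X Y : 'M[C]_p) : adj P *m P = 1%:M ->
  X *m Y = Y *m X ->
  (P *m X *m adj P) *m (P *m Y *m adj P) = (P *m Y *m adj P) *m (P *m X *m adj P).
Proof.
move=> PP XY; rewrite -!mulmxA !(mulmxA (adj P)) PP !mul1mx.
by rewrite !mulmxA -(mulmxA P) XY mulmxA.
Qed.

Lemma hfun_comm M X f : adj M = M -> X *m M = M *m X -> X *m hfun M f = hfun M f *m X.
Proof.
move=> MH XM; rewrite hfun.unlock; set P := spectralmx M; set Df := diag_mx _.
have PP : adj P *m P = 1%:M := spectral_adj_mul M.
have XE : X = adj P *m (P *m X *m adj P) *m P.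
  by rewrite !mulmxA PP mul1mx -mulmxA PP mulmx1.
have DfY : Df *m (P *m X *m adj P) = (P *m X *m adj P) *m Df.
  apply: (diag_mx_comm (d := spectral_diag M)) => [i j /= dij|].
    by rewrite !mxE /eigval dij.
  rewrite (hermitian_diag_spectral MH) -/P; exact: conj_unitary_comm PP (esym XM).
rewrite XE; move: (P *m X *m adj P) DfY => Y DfY.
rewrite -!mulmxA !(mulmxA P) (spectral_mul_adj M) !mul1mx.
by rewrite (mulmxA Df) DfY -mulmxA.
Qed.

Lemma hfun_affine M (a b : R) : adj M = M ->
  hfun M (fun x => a * x + b * (1 - x)) = a%:C *: M + b%:C *: (1%:M - M).
Proof.
move=> MH; have -> : 1%:M - M = hfun M (fun _ => 1) + (-1)%:C *: hfun M id.
  by rewrite hfun_cst hfun_id // rmorphN1 scaleN1r.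
rewrite -[X in _ = _ *: X + _](hfun_id MH) !hfunZ hfunD hfunZ hfunD.
by apply: eq_hfun => k /=; ring.
Qed.

End HermitianCalculus.

Section SquareRoot.
Variables (R : realType) (p : nat).
Implicit Types (M N X : 'M[R[i]]_p) (h : 'cV[R[i]]_p).

Definition sqrtmx M := hfun M Num.sqrt.

Lemma psd_eigval_ge0 M k : psd M -> 0 <= eigval M k.
Proof. by move=> M0; apply: (@psd_hfun_ge0 _ _ M id); rewrite hfun_id ?psd_adj. Qed.

Lemma sqrtmx_adj M : adj (sqrtmx M) = sqrtmx M.
Proof. exact: hfun_adj. Qed.

Lemma sqrtmxK M : psd M -> sqrtmx M *m sqrtmx M = M.
Proof.
move=> M0; rewrite hfunM -[RHS](hfun_id (psd_adj M0)); apply: eq_hfun => k.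
by rewrite -expr2 sqr_sqrtr ?psd_eigval_ge0.
Qed.

Lemma sqrtmx_comm M X : psd M -> X *m M = M *m X -> X *m sqrtmx M = sqrtmx M *m X.
Proof. by move=> /psd_adj; apply: hfun_comm. Qed.

Lemma psd_ker N h : psd N -> inner h (N *m h) = 0 -> N *m h = 0.
Proof.
move=> N0; rewrite -(sqrtmxK N0) -mulmxA inner_adj sqrtmx_adj => /eqP.
by rewrite inner_eq0 => /eqP ->; rewrite mulmx0.
Qed.

Lemma psd_summand_idem m (N : 'I_m -> 'M[R[i]]_p) i : (forall j, psd (N j)) ->
  (\sum_j N j) *m (\sum_j N j) = \sum_j N j -> N i *m (\sum_j N j) = N i.
Proof.
set P := \sum_j N j => N0 P_idem; apply: eq_mx_mul => g.
pose h := g - P *m g.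
have Ph : P *m h = 0 by rewrite mulmxBr mulmxA P_idem subrr.
have : N i *m h = 0.
  have sum0 : \sum_j inner h (N j *m h) = 0 by rewrite -inner_sumr -mulmx_suml Ph inner0r.
  exact/psd_ker/(psumr_eq0P (fun j _ => N0 j h) sum0).
by rewrite mulmxBr mulmxA => /eqP; rewrite subr_eq0 => /eqP.
Qed.

End SquareRoot.

Section PolarDecomposition.
Variables (R : realType) (n : nat).
Local Notation C := R[i].
Implicit Types (M T : 'M[C]_n).

Lemma polar_unitary T : T \in unitmx -> unitary (sqrtmx (adj T *m T) *m invmx T).
Proof.
move=> Tu; set U := sqrtmx (adj T *m T) *m invmx T.
suff UU : adj U *m U = 1%:M by split; last exact: mulmx1C.
rewrite /U adj_mul sqrtmx_adj !mulmxA -[_ *m sqrtmx _ *m sqrtmx _]mulmxA.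
rewrite (sqrtmxK (psd_adjMl T)).
by rewrite !mulmxA -adj_mul mulmxV // adj_mx1 mul1mx mulmxV.
Qed.

Lemma polar_conj T M : T \in unitmx -> M *m (adj T *m T) = adj T *m T *m M ->
  adj (sqrtmx (adj T *m T) *m invmx T) *m M *m (sqrtmx (adj T *m T) *m invmx T) =
  adj (invmx T) *m (adj T *m T *m M) *m invmx T.
Proof.
move=> Tu MQ; rewrite adj_mul sqrtmx_adj !mulmxA -[_ *m M *m sqrtmx _]mulmxA.
rewrite (sqrtmx_comm (psd_adjMl T) MQ) mulmxA -[_ *m sqrtmx _ *m sqrtmx _]mulmxA.
by rewrite (sqrtmxK (psd_adjMl T)) !mulmxA.
Qed.

End PolarDecomposition.

Section DoubleRatio.
Variables (R : realFieldType) (r : R).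
Hypothesis r01 : 0 <= r <= 1.

(* [2r / (1 + r) - r = r (1 - r) / (1 + r)] *)
Lemma double_ratio_ge : r <= 2 * r / (1 + r).
Proof.
case/andP: r01 => r0 r1; have r_r2 : 0 <= r * (1 - r) by rewrite mulr_ge0 ?subr_ge0.
by rewrite ler_pdivlMr; lra.
Qed.

Lemma double_ratio_fix : 2 * r / (1 + r) = r -> r * r = r.
Proof.
case/andP: r01 => r0 r1; move/(congr1 (fun x => x * (1 + r))).
by rewrite mulfVK; lra.
Qed.

End DoubleRatio.

Lemma hermitian_idem_trace (R : realType) (p : nat) (M : 'M[R[i]]_p) : adj M = M ->
  (forall k, 0 <= eigval M k <= 1) ->
  \tr (hfun M (fun x => 2 * x / (1 + x))) = \tr M -> M *m M = M.
Proof.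
move=> MH M01; rewrite -{2}(hfun_id MH) !mxtrace_hfun -!rmorph_sum => /complexI /eqP.
rewrite -subr_eq0 -sumrB => /eqP tr0.
have gap_ge0 k : true -> 0 <= 2 * eigval M k / (1 + eigval M k) - eigval M k.
  by rewrite subr_ge0 double_ratio_ge.
rewrite -(hfun_id MH) hfunM; apply: eq_hfun => k; apply: double_ratio_fix => //.
by apply/eqP; rewrite -subr_eq0 (psumr_eq0P gap_ge0 tr0).
Qed.

Section ComplexLimits.
Variable R : realType.
Local Notation C := R[i].
Implicit Types (u v : nat -> C) (l : C).

Lemma eq_cvgC u v l : u =1 v -> cvgC u l -> cvgC v l.
Proof. by move=> uv cv e /cv [N HN]; exists N => m /HN; rewrite uv. Qed.

Lemma normC_small_eq0 (z : C) : (forall e : R, 0 < e -> `|z| < e%:C) -> z = 0.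
Proof.
move=> small; apply/eqP; apply: contraT => z0.
have zE : `|z| = (complex.Re `|z|)%:C by apply/conjC_fixE/geC0_conj.
have := small (complex.Re `|z|); rewrite -zE ltxx; apply.
by rewrite -ltcR -zE normr_gt0.
Qed.

Lemma cvgC_eventually_cst u c l N0 :
  (forall m, (N0 <= m)%N -> u m = c) -> cvgC u l -> c = l.
Proof.
move=> uc cv; apply/eqP; rewrite -subr_eq0; apply/eqP; apply: normC_small_eq0 => e /cv [N HN].
by rewrite -(uc (maxn N N0)) ?leq_maxr // HN // leq_maxl.
Qed.

Lemma half_splitC (e : R) : e%:C = (e / 2)%:C + (e / 2)%:C.
Proof. by rewrite -rmorphD; congr (_%:C); field. Qed.

Lemma cvgC_natmul_eq0 (x : C) : cvgC (fun N => x *+ N) x -> x = 0.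
Proof.
move=> cv; apply: normC_small_eq0 => e e0.
have [N HN] := cv _ (divr_gt0 e0 (ltr0Sn _ 1)).
have -> : x = (x *+ N.+1 - x) - (x *+ N - x) by rewrite mulrS; ring.
rewrite half_splitC; apply: le_lt_trans (ler_normB _ _) _.
exact: ltrD (HN _ (leqnSn N)) (HN _ (leqnn N)).
Qed.

Lemma cvgCD u v l1 l2 : cvgC u l1 -> cvgC v l2 ->
  cvgC (fun N => u N + v N) (l1 + l2).
Proof.
move=> cu cv e e0; have e20 : 0 < e / 2 by rewrite divr_gt0.
have [N1 H1] := cu _ e20; have [N2 H2] := cv _ e20.
exists (maxn N1 N2) => m; rewrite geq_max => /andP[m1 m2].
rewrite opprD addrACA half_splitC.
by apply: le_lt_trans (ler_normD _ _) (ltrD (H1 _ m1) (H2 _ m2)).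
Qed.

End ComplexLimits.

Section WeakCountableAdditivity.
Variables (R : realType) (d : measure_display) (X : measurableType d) (n : nat).
Local Notation C := R[i].
Local Open Scope classical_set_scope.
Implicit Types (f g : set X -> 'M[C]_n) (A B E : set X).

Lemma eq_countably_additive (g1 g2 : set X -> C) :
  g1 =1 g2 -> countably_additive g1 -> countably_additive g2.
Proof.
by move=> g12 ca F mF tF; rewrite -g12; apply: eq_cvgC (ca F mF tF) => N; apply: eq_bigr.
Qed.

Definition weakly_countably_additive f :=
  forall h k : 'cV[C]_n, countably_additive (fun E => inner h (f E *m k)).

Lemma wca_set0 f : weakly_countably_additive f -> f set0 = 0.
Proof.
move=> fca; apply: eq_mx_inner => h k; rewrite mul0mx inner0r.
have t0 : trivIset setT (fun _ : nat => set0 : set X) by move=> i j _ _ [x []].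
have := fca h k (fun _ => set0) (fun _ => measurable0) t0.
rewrite bigcup0 // => cv; apply: cvgC_natmul_eq0; apply: eq_cvgC cv => N.
by rewrite sumr_const card_ord.
Qed.

Lemma wca_setU f A B : weakly_countably_additive f -> measurable A -> measurable B ->
  A `&` B = set0 -> f (A `|` B) = f A + f B.
Proof.
move=> fca mA mB AB; apply: eq_mx_inner => h k.
have mAB i : measurable (bigcup2 A B i) by rewrite /bigcup2; case: ifP => // _; case: ifP.
have := fca h k _ mAB; rewrite -trivIset_bigcup2 bigcup2E => /(_ AB) cv.
rewrite mulmxDl innerDr; apply/esym/(cvgC_eventually_cst (N0 := 2) _ cv).
case=> [|[|m]] // _; rewrite !big_ord_recl big1 ?addr0 // => i _.
by rewrite /= wca_set0 // mul0mx inner0r.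
Qed.

Lemma wca_setI f E : measurable E -> weakly_countably_additive f ->
  weakly_countably_additive (fun A => f (A `&` E)).
Proof.
move=> mE fca h k F mF tF; rewrite setI_bigcupl.
apply: fca => [i|i j _ _ [x [[Fi _] [Fj _]]]]; first exact: measurableI.
by apply: tF => //; exists x.
Qed.

Lemma wcaD f g : weakly_countably_additive f -> weakly_countably_additive g ->
  weakly_countably_additive (fun E => f E + g E).
Proof.
move=> fca gca h k F mF tF; rewrite mulmxDl innerDr.
apply: eq_cvgC (cvgCD (fca h k F mF tF) (gca h k F mF tF)) => N.
by rewrite -big_split; apply: eq_bigr => i _; rewrite mulmxDl innerDr.
Qed.

Lemma wcaZ f c : weakly_countably_additive f -> weakly_countably_additive (fun E => c *: f E).
Proof.
move=> fca h k; apply: eq_countably_additive (fca h (c *: k)) => E.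
by rewrite -scalemxAl scalemxAr.
Qed.

Lemma wca_congr f (T : 'M[C]_n) : weakly_countably_additive f ->
  weakly_countably_additive (fun E => adj T *m f E *m T).
Proof.
move=> fca h k; apply: eq_countably_additive (fca (T *m h) (T *m k)) => E.
by rewrite -!mulmxA [RHS]inner_adj adjK.
Qed.

End WeakCountableAdditivity.

Section CompletelyPositive.
Variables (R : realType) (A : algType R[i]) (S : unital_Cstar_algebra A) (n : nat).
Local Notation C := R[i].
Implicit Types (phi psi : A -> 'M[C]_n) (T : 'M[C]_n).

Lemma cs_star1 : cs_star S 1 = 1.
Proof. by have := cs_starM S (cs_star S 1) 1; rewrite mulr1 !cs_starK mulr1. Qed.

Lemma mx_positive1 : mx_positive S (1%:M : 'M[A]_1).
Proof.
split; first by apply/matrixP=> i j; rewrite /mx_star !mxE !ord1 eqxx mulr1n cs_star1.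
move=> lam lam_spec; have [-> //|lam1] := eqVneq lam 1; exfalso; apply: lam_spec.
have lam1' : 1 - lam != 0 by rewrite subr_eq0 eq_sym.
have lamE : (1 : A) - lam *: 1 = (1 - lam) *: 1 by rewrite scalerBl scale1r.
exists ((1 - lam)^-1 *: 1)%:M; split; apply/matrixP=> i j;
  rewrite !ord1 !mxE big_ord1 !mxE eqxx !mulr1n lamE -scalerAl mul1r scalerA.
  by rewrite mulVf // scale1r.
by rewrite mulfV // scale1r.
Qed.

Lemma cp_psd1 phi : completely_positive S phi -> psd (phi 1).
Proof.
case=> _ phi_pos h; have := phi_pos 1%N 1%:M mx_positive1 (fun _ => h).
by rewrite !big_ord1 mxE eqxx mulr1n.
Qed.

Lemma cp_congr phi T : completely_positive S phi ->
  completely_positive S (fun a => adj T *m phi a *m T).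
Proof.
case=> phi_lin phi_pos; split=> [c a b|k M Mpos xi].
  by rewrite phi_lin mulmxDr mulmxDl -scalemxAr -scalemxAl.
under eq_bigr => i _ do under eq_bigr => j _ do rewrite -!mulmxA inner_adj adjK.
exact: phi_pos k M Mpos (fun i => T *m xi i).
Qed.

Lemma cpD phi psi : completely_positive S phi -> completely_positive S psi ->
  completely_positive S (fun a => phi a + psi a).
Proof.
case=> phi_lin phi_pos [psi_lin psi_pos]; split=> [c a b|k M Mpos xi].
  by rewrite phi_lin psi_lin scalerDr addrACA.
under eq_bigr => i _ do under eq_bigr => j _ do rewrite mulmxDl innerDr.
under eq_bigr => i _ do rewrite big_split.
by rewrite big_split addr_ge0 ?phi_pos ?psi_pos.
Qed.

Lemma cpZ phi (c : R) : 0 <= c -> completely_positive S phi ->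
  completely_positive S (fun a => c%:C *: phi a).
Proof.
move=> c0 [phi_lin phi_pos]; split=> [z a b|k M Mpos xi].
  by rewrite phi_lin scalerDr !scalerA mulrC.
under eq_bigr => i _ do under eq_bigr => j _ do rewrite -scalemxAl innerZr.
under eq_bigr => i _ do rewrite -mulr_sumr.
by rewrite -mulr_sumr mulr_ge0 ?ler0c ?phi_pos.
Qed.

End CompletelyPositive.

Section Instruments.
Variables (R : realType) (d : measure_display) (X : measurableType d).
Variables (A : algType R[i]) (S : unital_Cstar_algebra A) (n : nat).
Local Notation C := R[i].
Local Open Scope classical_set_scope.
Implicit Types (I J K : set X -> A -> 'M[C]_n) (mu : set X -> 'M[C]_n) (E : set X).

Lemma CP_instrument_congr J (T : 'M[C]_n) : CP_instrument S J ->
  CP_instrument S (fun E a => adj T *m J E a *m T).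
Proof. by case=> Jcp Jca; split=> [E /Jcp/cp_congr //|a]; apply: wca_congr. Qed.

Lemma CP_instrumentD J K : CP_instrument S J -> CP_instrument S K ->
  CP_instrument S (fun E a => J E a + K E a).
Proof.
case=> Jcp Jca [Kcp Kca]; split=> [E mE|a]; first by apply: cpD; [apply: Jcp | apply: Kcp].
exact: wcaD.
Qed.

Lemma CP_instrumentZ J (c : R) : 0 <= c -> CP_instrument S J ->
  CP_instrument S (fun E a => c%:C *: J E a).
Proof. by move=> c0 [Jcp Jca]; split=> [E /Jcp/(cpZ c0) //|a]; apply: wcaZ. Qed.

Lemma CP_instrument_setI J E : measurable E -> CP_instrument S J ->
  CP_instrument S (fun F a => J (F `&` E) a).
Proof.
move=> mE [Jcp Jca]; split=> [F mF|a]; first exact: Jcp (measurableI _ _ mF mE).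
exact: (wca_setI (f := fun F => J F a) mE (Jca a)).
Qed.

Lemma CP_instrument_split J F E a : CP_instrument S J -> measurable F -> measurable E ->
  J F a = J (F `&` E) a + J (F `&` ~` E) a.
Proof.
move=> [_ Jca] mF mE; rewrite -[in LHS](setIT F) -(setUCr E) setIUr.
apply: (wca_setU (Jca a)); [exact: measurableI | exact/measurableI/measurableC |].
by rewrite setIACA setICr setI0.
Qed.

Lemma UCP_instrument_normalize J (T Ti : 'M[C]_n) : CP_instrument S J ->
  T *m Ti = 1%:M -> J setT 1 = adj T *m T ->
  UCP_instrument S (fun E a => adj Ti *m J E a *m Ti).
Proof.
move=> Jcp TTi J1; split; first exact: CP_instrument_congr.
by rewrite J1 !mulmxA -adj_mul -mulmxA TTi adj_mx1 mul1mx.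
Qed.

Lemma marginal_normalized_POVM I : UCP_instrument S I -> normalized_POVM (marginal I).
Proof.
case=> [[Icp Ica] I1]; split=> //; split=> [E mE|]; first exact: cp_psd1 (Icp E mE).
exact: Ica.
Qed.

Lemma normalized_POVM_setC mu E : normalized_POVM mu -> measurable E ->
  mu (~` E) = 1%:M - mu E.
Proof.
case=> [[_ muca] mu1] mE; rewrite -mu1 -(setUCr E) wca_setU ?setICr //.
  by rewrite addrC addKr.
exact: measurableC.
Qed.

End Instruments.

Section ProjectionValued.
Variables (R : realType) (d : measure_display) (X : measurableType d) (n : nat).
Variable mu : set X -> 'M[R[i]]_n.
Hypothesis mu_norm : normalized_POVM mu.
Hypothesis mu_idem : forall E, measurable E -> mu E *m mu E = mu E.
Local Open Scope classical_set_scope.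

Lemma projection_valued_Cstar_extreme : Cstar_extreme_POVM mu.
Proof.
split=> // m T mus mus_norm T_unit T_sum mu_dec i.
pose nu E := adj (T i) *m mus i E *m T i; pose Q := adj (T i) *m T i.
have nu_psd E : measurable E -> psd (nu E) by move=> mE; apply/psd_congr/(mus_norm i).1.1.
have nu_mu E : measurable E -> nu E *m mu E = nu E.
  move=> mE; rewrite (mu_dec E mE) psd_summand_idem -?mu_dec ?mu_idem //.
  by move=> j; apply/psd_congr/(mus_norm j).1.1.
have Q_mu E : measurable E -> Q *m mu E = nu E.
  move=> mE; have mEc := measurableC mE.
  have nuC_mu : nu (~` E) *m mu E = 0.
    rewrite -[nu (~` E)](nu_mu _ mEc) (normalized_POVM_setC mu_norm mE) -mulmxA mulmxBl mul1mx.
    by rewrite mu_idem // subrr mulmx0.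
  have Q_nu : Q = nu E + nu (~` E).
    rewrite /nu (normalized_POVM_setC (mus_norm i) mE) -mulmxDl -mulmxDr.
    by rewrite addrC subrK mulmx1.
  by rewrite Q_nu mulmxDl nuC_mu addr0 nu_mu.
have mu_Q E : measurable E -> mu E *m Q = Q *m mu E.
  move=> mE; rewrite -[LHS]adjK adj_mul (psd_adj (psd_adjMl _)) (psd_adj (mu_norm.1.1 E mE)).
  by rewrite Q_mu // (psd_adj (nu_psd E mE)).
exists (sqrtmx Q *m invmx (T i)); split; first exact: polar_unitary.
move=> E mE; rewrite (polar_conj (T_unit i) (mu_Q E mE)) Q_mu // /nu.
by rewrite (adj_conjK _ (mulmxV (T_unit i))).
Qed.

End ProjectionValued.

Definition weight (R : realFieldType) (al x : R) := al * x + (1 - al) * (1 - x).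

Lemma weight_gt0 (R : realFieldType) (al x : R) : 0 < al < 1 -> 0 <= x <= 1 -> 0 < weight al x.
Proof. by rewrite /weight => /andP[a0 a1] /andP[x0 x1]; nra. Qed.

Lemma weight_two_thirds (R : realFieldType) (x : R) :
  0 <= x -> 2 / 3 * x / weight (2 / 3) x = 2 * x / (1 + x).
Proof. by rewrite /weight => x0; field; lra. Qed.

Section Tilt.
Variables (R : realType) (d : measure_display) (X : measurableType d).
Variables (A : algType R[i]) (S : unital_Cstar_algebra A) (n : nat).
Variable I : set X -> A -> 'M[R[i]]_n.
Hypothesis I_ucp : UCP_instrument S I.
Variable E : set X.
Hypothesis mE : measurable E.
Local Notation M := (I E 1).
Local Open Scope classical_set_scope.

Lemma marginal_setC : I (~` E) 1 = 1%:M - M.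
Proof. exact: normalized_POVM_setC (marginal_normalized_POVM I_ucp) mE. Qed.

Lemma marginal_psd F : measurable F -> psd (I F 1).
Proof. exact: (marginal_normalized_POVM I_ucp).1.1. Qed.

Lemma marginal_adj : adj M = M.
Proof. exact/psd_adj/marginal_psd. Qed.

Lemma marginal_eigval01 k : 0 <= eigval M k <= 1.
Proof.
rewrite (psd_eigval_ge0 _ (marginal_psd mE)) /=.
have := @psd_hfun_ge0 _ _ M (fun x => 0 * x + 1 * (1 - x)) k.
rewrite hfun_affine ?marginal_adj // scale0r add0r scale1r -marginal_setC.
by rewrite mul0r add0r mul1r subr_ge0; apply; apply/marginal_psd/measurableC.
Qed.

Definition tilt (al : R) F a := al%:C *: I (F `&` E) a + (1 - al)%:C *: I (F `&` ~` E) a.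

Lemma tilt_CP al : 0 <= al <= 1 -> CP_instrument S (tilt al).
Proof.
case/andP=> al0 al1; have I_cp := I_ucp.1.
apply: CP_instrumentD; apply: CP_instrumentZ; rewrite ?subr_ge0 //.
  exact: CP_instrument_setI.
exact/CP_instrument_setI/I_cp/measurableC.
Qed.

Lemma tilt_setT al : tilt al setT 1 = hfun M (weight al).
Proof. by rewrite /tilt !setTI marginal_setC hfun_affine ?marginal_adj. Qed.

Lemma tilt_set al : tilt al E 1 = al%:C *: M.
Proof.
by rewrite /tilt setIid setICr (wca_set0 (I_ucp.1.2 1)) scaler0 addr0.
Qed.

Lemma tiltD al F a : measurable F -> tilt al F a + tilt (1 - al) F a = I F a.
Proof.
have w1 b : b + (1 - b) = 1 by rewrite addrC subrK.
move=> mF; rewrite /tilt addrACA -!scalerDl -!rmorphD !w1 rmorph1 !scale1r.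
by rewrite -(CP_instrument_split a I_ucp.1 mF mE).
Qed.

Definition tilt_factor (al : R) := hfun M (fun x => Num.sqrt (weight al x)).
Definition tilt_factor_inv (al : R) := hfun M (fun x => (Num.sqrt (weight al x))^-1).

Lemma weight_marginal_gt0 al k : 0 < al < 1 -> 0 < weight al (eigval M k).
Proof. by move=> al01; rewrite weight_gt0 ?marginal_eigval01. Qed.

Lemma tilt_factor_adjM al : 0 < al < 1 ->
  adj (tilt_factor al) *m tilt_factor al = hfun M (weight al).
Proof.
move=> al01; rewrite hfun_adj hfunM; apply: eq_hfun => k.
by rewrite -expr2 sqr_sqrtr // ltW // weight_marginal_gt0.
Qed.

Lemma tilt_factorK al : 0 < al < 1 -> tilt_factor al *m tilt_factor_inv al = 1%:M.
Proof.
by move=> al01; apply: hfun_inv => k; rewrite sqrtr_eq0 -ltNge weight_marginal_gt0.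
Qed.

Lemma tilt_normalized_UCP al : 0 < al < 1 ->
  UCP_instrument S (fun F a => adj (tilt_factor_inv al) *m tilt al F a *m tilt_factor_inv al).
Proof.
move=> al01; apply: UCP_instrument_normalize (tilt_factorK al01) _.
  by apply: tilt_CP; case/andP: al01 => al0 al1; rewrite !ltW.
by rewrite tilt_setT tilt_factor_adjM.
Qed.

Lemma tilt_normalized_set al : 0 < al < 1 ->
  adj (tilt_factor_inv al) *m tilt al E 1 *m tilt_factor_inv al =
  hfun M (fun x => al * x / weight al x).
Proof.
move=> al01; rewrite tilt_set -[X in _ *: X](hfun_id marginal_adj) hfun_adj hfunZ !hfunM.
apply: eq_hfun => k; have w0 := weight_marginal_gt0 k al01.
by rewrite -[in RHS](sqr_sqrtr (ltW w0)) expr2 invfM; ring.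
Qed.

Lemma Cstar_extreme_marginal_idem : Cstar_extreme_instrument S I -> M *m M = M.
Proof.
case=> _ I_ext.
pose al (i : 'I_2) : R := if i == ord0 then 2 / 3 else 1 / 3.
have al01 i : 0 < al i < 1 by rewrite /al; case: (i == ord0); apply/andP; split; lra.
pose T i := tilt_factor (al i); pose Ti i := tilt_factor_inv (al i).
pose Is i F a := adj (Ti i) *m tilt (al i) F a *m Ti i.
have T_unit i : T i \in unitmx := (mulmx1_unit (tilt_factorK (al01 i))).1.
have TiT i : Ti i *m T i = 1%:M := mulmx1C (tilt_factorK (al01 i)).
have T_sum : \sum_i adj (T i) *m T i = 1%:M.
  rewrite !big_ord_recl big_ord0 addr0 !tilt_factor_adjM // hfunD -(hfun1 M).
  by apply: eq_hfun => k; rewrite /weight /al /=; field.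
have I_dec F : measurable F -> forall a, I F a = \sum_i adj (T i) *m Is i F a *m T i.
  move=> mF a; rewrite !big_ord_recl big_ord0 addr0 /Is !(adj_conjK _ (TiT _)).
  by rewrite /al /= (_ : 1 / 3 = 1 - 2 / 3 :> R) ?tiltD //; field.
have Is_ucp i : UCP_instrument S (Is i) := tilt_normalized_UCP (al01 i).
have [U [[_ UU] IsU]] := I_ext 2 T Is Is_ucp T_unit T_sum I_dec ord0.
apply: hermitian_idem_trace marginal_adj marginal_eigval01 _.
have := congr1 mxtrace (IsU E mE 1).
rewrite /Is tilt_normalized_set // mxtrace_mulC mulmxA UU mul1mx => <-.
congr (\tr _); apply: eq_hfun => k.
by rewrite weight_two_thirds //; case/andP: (marginal_eigval01 k).
Qed.

End Tilt.

Theorem theorem4p5 (R : realType) (d : measure_display) (X : measurableType d)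
  (A : algType R[i]) (S : unital_Cstar_algebra A) (n : nat)
  (I : set X -> A -> 'M[R[i]]_n) :
  UCP_instrument S I -> Cstar_extreme_instrument S I ->
  Cstar_extreme_POVM (marginal I).
Proof.
move=> I_ucp I_ext; apply: projection_valued_Cstar_extreme.
  exact: marginal_normalized_POVM I_ucp.
by move=> E mE; have := Cstar_extreme_marginal_idem I_ucp mE I_ext.
Qed.
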